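(* Consider any demand-private coded caching scheme with $N=2$ files and $K=2$ users. Then for every $i\in\{0,1\}$ and $j\in\{0,1\}$, with $\tilde i=(i+1)\bmod 2$, the conditional joint distributions satisfy $(X,Z_1,W_j\mid D_1=j)\sim(X,Z_1,W_j\mid D_0=i,D_1=j)\sim(X,Z_1,W_j\mid D_0=\tilde i,D_1=j)$ and $(X,Z_0,W_j\mid D_0=j)\sim(X,Z_0,W_j\mid D_0=j,D_1=i)\sim(X,Z_0,W_j\mid D_0=j,D_1=\tilde i)$, where $\sim$ denotes equality of (conditional) distributions.
   Context: Setting ($N=K=2$): files $W_0,W_1$ independent, uniform on $[2^F]=\{0,\dots,2^F-1\}$; demands $D_0,D_1$ of users $0,1$ independent and uniform on $\{0,1\}$. User $k$ shares a key $S_k$ (finite alphabet) with the server; the server has private randomness $P$ (finite alphabet); $P,S_0,S_1,D_0,D_1,W_0,W_1$ are mutually independent. Cache content $Z_k=(C_k(S_k,P,W_0,W_1),S_k)$ with $C_k$ valued in $[2^{MF}]$; broadcast $X=(E(W_0,W_1,D_0,D_1,P,S_0,S_1),J(D_0,D_1,P,S_0,S_1))$ with $E$ valued in $[2^{RF}]$ and $J$ valued in a finite set of negligible $\log_2$-size relative to $F$. The scheme is demand-private if (decodability) $W_{D_k}$ is a deterministic function of $(D_k,S_k,X,Z_k)$ for each $k$, and (privacy) $I(D_1;Z_0,X,D_0)=0$ and $I(D_0;Z_1,X,D_1)=0$. *)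

From mathcomp Require Import all_boot all_order all_algebra.
From mathcomp Require Import reals exp.
Set Implicit Arguments. Unset Strict Implicit. Unset Printing Implicit Defensive.
Import Order.TTheory GRing.Theory Num.Theory.
Local Open Scope ring_scope.

Definition is_pmf (R : realType) (T : finType) (p : T -> R) : Prop :=
  (forall t, 0 <= p t) /\ \sum_(t : T) p t = 1.

Definition prob (R : realType) (Om : finType) (mu : Om -> R) (E : pred Om) : R :=
  \sum_(w : Om | E w) mu w.

Definition cprob (R : realType) (Om : finType) (mu : Om -> R) (E C : pred Om) : R :=
  prob mu (predI E C) / prob mu C.

Definition mutinf (R : realType) (Om : finType) (mu : Om -> R)
    (A B : finType) (f : Om -> A) (g : Om -> B) : R :=
  \sum_(a : A) \sum_(b : B)
    (let pab := prob mu (fun w => (f w == a) && (g w == b)) in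
     if pab == 0 then 0
     else pab * ln (pab / (prob mu (fun w => f w == a) * prob mu (fun w => g w == b)))).

Definition file (F : nat) := 'I_(2 ^ F).

Definition Omega (TP TS0 TS1 : finType) (F : nat) : finType :=
  (TP * TS0 * TS1 * ('I_2 * 'I_2) * (file F * file F))%type.

Section Accessors.
Variables (TP TS0 TS1 : finType) (F : nat).
Definition omP (w : Omega TP TS0 TS1 F) : TP := w.1.1.1.1.
Definition omS0 (w : Omega TP TS0 TS1 F) : TS0 := w.1.1.1.2.
Definition omS1 (w : Omega TP TS0 TS1 F) : TS1 := w.1.1.2.
Definition omD0 (w : Omega TP TS0 TS1 F) : 'I_2 := w.1.2.1.
Definition omD1 (w : Omega TP TS0 TS1 F) : 'I_2 := w.1.2.2.
Definition omW0 (w : Omega TP TS0 TS1 F) : file F := w.2.1.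
Definition omW1 (w : Omega TP TS0 TS1 F) : file F := w.2.2.
Definition omW (j : 'I_2) (w : Omega TP TS0 TS1 F) : file F :=
  if j == ord0 then omW0 w else omW1 w.
End Accessors.

Definition joint (R : realType) (TP TS0 TS1 : finType) (F : nat)
    (pP : TP -> R) (pS0 : TS0 -> R) (pS1 : TS1 -> R)
    (w : Omega TP TS0 TS1 F) : R :=
  pP (omP w) * pS0 (omS0 w) * pS1 (omS1 w)
  * (4%:R)^-1 * (((2 ^ F) * (2 ^ F))%N%:R)^-1.

Definition bcast (TP TS0 TS1 TE TJ : finType) (F : nat)
    (E : file F -> file F -> 'I_2 -> 'I_2 -> TP -> TS0 -> TS1 -> TE)
    (J : 'I_2 -> 'I_2 -> TP -> TS0 -> TS1 -> TJ)
    (w : Omega TP TS0 TS1 F) : TE * TJ :=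
  (E (omW0 w) (omW1 w) (omD0 w) (omD1 w) (omP w) (omS0 w) (omS1 w),
   J (omD0 w) (omD1 w) (omP w) (omS0 w) (omS1 w)).

Definition cache0 (TP TS0 TS1 TC0 : finType) (F : nat)
    (C0 : TS0 -> TP -> file F -> file F -> TC0)
    (w : Omega TP TS0 TS1 F) : TC0 * TS0 :=
  (C0 (omS0 w) (omP w) (omW0 w) (omW1 w), omS0 w).
Definition cache1 (TP TS0 TS1 TC1 : finType) (F : nat)
    (C1 : TS1 -> TP -> file F -> file F -> TC1)
    (w : Omega TP TS0 TS1 F) : TC1 * TS1 :=
  (C1 (omS1 w) (omP w) (omW0 w) (omW1 w), omS1 w).

Definition flip2 (i : 'I_2) : 'I_2 := inord ((i + 1) %% 2).

From mathcomp Require Import all_boot all_order all_algebra.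
From mathcomp Require Import reals exp.
From mathcomp Require Import ring lra.
Set Implicit Arguments. Unset Strict Implicit. Unset Printing Implicit Defensive.
Import Order.TTheory GRing.Theory Num.Theory.
Local Open Scope ring_scope.

(* Privacy says I(D_0 ; Z_1, X, D_1) = 0; by the equality case of Gibbs' inequality
   the demand D_0 is then independent of user 1's view Y = (Z_1, X, D_1).  By
   decodability W_j is almost surely a function of Y on {D_1 = j}, so the event
   {X = x, Z_1 = z, W_j = v, D_1 = j} is almost surely an event of Y, hence independent
   of {D_0 = i}.  As D_0 and D_1 are independent, additionally conditioning on
   D_0 = i does not change the conditional probability given D_1 = j.  User 0 is
   symmetric. *)

Section Gibbs.
Variable R : realType.

Lemma ln_leif_subr1 (x : R) : 0 < x -> ln x <= x - 1 ?= iff (x == 1).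
Proof.
move=> x_gt0; apply/leifP; have [->|x_neq1] := eqVneq x 1; first by rewrite ln1 subrr.
have lnx_neq0 : ln x != 0 by rewrite ln_eq0.
by have := expR_gt1Dx lnx_neq0; rewrite lnK ?posrE // ltrBrDl.
Qed.

Definition kl_term (p q : R) : R := if p == 0 then 0 else p * ln (p / q).

(* For p > 0: p ln (p/q) = - p ln (q/p) >= - p (q/p - 1) = p - q. *)
Lemma kl_term_leif (p q : R) : 0 <= p -> 0 <= q -> (0 < p -> 0 < q) ->
  p - q <= kl_term p q ?= iff (p == q).
Proof.
rewrite /kl_term le0r => /orP[/eqP->|p_gt0] q_ge0 q_pos.
  apply/leifP; rewrite eqxx sub0r eq_sym oppr_eq0 oppr_lt0.
  by case: eqVneq => //= q_neq0; rewrite lt0r q_neq0.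
have q_gt0 := q_pos p_gt0; rewrite gt_eqF //.
have qp_gt0 : 0 < q / p by rewrite divr_gt0.
have := @ln_leif_subr1 _ qp_gt0; rewrite -[p / q]invf_div lnV ?posrE //.
have p_neq0 : p != 0 by rewrite gt_eqF.
rewrite (can2_eq (divfK p_neq0) (mulfK p_neq0)) mul1r eq_sym => /leifP ln_qp; apply/leifP.
case: eqVneq ln_qp => [<- _|_]; first by rewrite divff // ln1 oppr0 mulr0 subrr.
rewrite -(ltr_pM2l p_gt0) mulrBr mulrCA divff // mulr1 mulrN; lra.
Qed.
End Gibbs.

Section FiniteProbability.
Variables (R : realType) (Om : finType) (mu : Om -> R).
Hypothesis mu_ge0 : forall w, 0 <= mu w.

Lemma prob_ge0 (E : pred Om) : 0 <= prob mu E.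
Proof. exact: sumr_ge0. Qed.

Lemma subset_prob_le (E1 E2 : pred Om) :
  (forall w, E1 w -> E2 w) -> prob mu E1 <= prob mu E2.
Proof.
move=> sub12; rewrite /prob (big_mkcond E1) (big_mkcond E2) ler_sum // => w _.
by case: ifP => [/sub12->|_]; last case: ifP.
Qed.

Lemma eq_prob_ae (P Q : pred Om) :
  (forall w, 0 < mu w -> P w = Q w) -> prob mu P = prob mu Q.
Proof.
move=> PQ; rewrite /prob big_mkcond [RHS]big_mkcond; apply: eq_bigr => w _.
by have := mu_ge0 w; rewrite le0r => /orP[/eqP->|/PQ->]; rewrite ?if_same.
Qed.

Lemma prob_partition (A : finType) (f : Om -> A) (E : pred Om) (S : pred A) :
  prob mu (fun w => E w && S (f w)) = \sum_(a | S a) prob mu (fun w => E w && (f w == a)).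
Proof.
rewrite /prob (partition_big f S) => [|w /andP[]//].
apply: eq_bigr => a Sa; apply: eq_bigl => w.
by case: eqVneq => [->|_]; rewrite ?Sa ?andbT ?andbF.
Qed.

Lemma prob_indep_preimage (A B : finType) (f : Om -> A) (g : Om -> B) :
  (forall a b, prob mu (fun w => (f w == a) && (g w == b))
               = prob mu (fun w => f w == a) * prob mu (fun w => g w == b)) ->
  forall a (S : pred B), prob mu (fun w => (f w == a) && S (g w))
                         = prob mu (fun w => f w == a) * prob mu (fun w => S (g w)).
Proof.
move=> fg_indep a S; rewrite prob_partition (prob_partition g xpredT) mulr_sumr.
by apply: eq_bigr => b _; rewrite fg_indep.
Qed.

Lemma cprobI_indep (E A B C H : pred Om) :
  C =1 (fun w => A w && B w) ->
  prob mu C = prob mu A * prob mu B ->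
  prob mu (fun w => A w && H w) = prob mu A * prob mu H ->
  (forall w, 0 < mu w -> E w && B w = H w) ->
  prob mu A != 0 ->
  cprob mu E B = cprob mu E C.
Proof.
move=> C_AB AB_indep AH_indep EB_H A_neq0; rewrite /cprob AB_indep.
have -> : prob mu (predI E B) = prob mu H by apply: eq_prob_ae.
have -> : prob mu (predI E C) = prob mu (fun w => A w && H w).
  by apply: eq_prob_ae => w /EB_H <-; rewrite /= C_AB andbCA andbA.
by rewrite AH_indep invfM mulrACA divff // mul1r.
Qed.

Lemma decoded_event_ae (TX TZ TD TW : eqType) (X : Om -> TX) (Z : Om -> TZ)
    (D : Om -> TD) (W : TD -> Om -> TW) (dec : TZ * TX * TD -> TW) x z d v :
  (forall w, 0 < mu w -> dec (Z w, X w, D w) = W (D w) w) ->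
  forall w, 0 < mu w ->
  [&& X w == x, Z w == z & W d w == v] && (D w == d)
  = ((Z w, X w, D w) == (z, x, d)) && (dec (z, x, d) == v).
Proof.
move=> decP w /decP; rewrite !xpair_eqE.
case: (X w =P x) => [->|_]; last by rewrite !andbF.
case: (Z w =P z) => [->|_]; last by rewrite !andbF.
case: (D w =P d) => [->|_]; last by rewrite !andbF.
by move=> <-; rewrite andbT.
Qed.

Hypothesis mu_sum1 : \sum_w mu w = 1.

Lemma sum_prob_fibres (A : finType) (f : Om -> A) :
  \sum_a prob mu (fun w => f w == a) = 1.
Proof. by rewrite -mu_sum1 (partition_big f xpredT). Qed.

Lemma sum_prob_joint_fibres (A B : finType) (f : Om -> A) (g : Om -> B) :
  \sum_a \sum_b prob mu (fun w => (f w == a) && (g w == b)) = 1.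
Proof.
rewrite pair_bigA -(sum_prob_fibres (fun w => (f w, g w))).
by apply: eq_bigr => -[a b] _; apply: eq_bigl => w; rewrite xpair_eqE.
Qed.

Lemma mutinf_eq0_indep (A B : finType) (f : Om -> A) (g : Om -> B) :
  mutinf mu f g = 0 -> forall a b,
  prob mu (fun w => (f w == a) && (g w == b))
  = prob mu (fun w => f w == a) * prob mu (fun w => g w == b).
Proof.
move=> I_eq0.
pose p a b := prob mu (fun w => (f w == a) && (g w == b)).
pose q a b := prob mu (fun w => f w == a) * prob mu (fun w => g w == b).
have q_ge0 a b : 0 <= q a b by rewrite mulr_ge0 ?prob_ge0.
have q_gt0 a b : 0 < p a b -> 0 < q a b.
  move=> p_gt0; apply: mulr_gt0; apply: lt_le_trans p_gt0 _;
    by apply: subset_prob_le => w /andP[].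
have gap a b : p a b - q a b <= kl_term (p a b) (q a b) ?= iff (p a b == q a b).
  exact: kl_term_leif (prob_ge0 _) (q_ge0 a b) (q_gt0 a b).
(* The gaps are nonnegative and sum to I(f ; g) - (1 - 1) = 0. *)
have gap_sum : \sum_a \sum_b (kl_term (p a b) (q a b) - (p a b - q a b)) = 0.
  under eq_bigr do rewrite sumrB; rewrite sumrB.
  have -> : \sum_a \sum_b kl_term (p a b) (q a b) = mutinf mu f g by [].
  under [X in _ - X]eq_bigr do rewrite sumrB; rewrite sumrB.
  rewrite sum_prob_joint_fibres.
  under [X in _ - (_ - X)]eq_bigr do rewrite -mulr_sumr.
  by rewrite -mulr_suml !sum_prob_fibres I_eq0 mulr1 !subrr.
move=> a b; apply/eqP; rewrite -(gap a b).2 eq_sym -subr_eq0.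
apply/eqP; apply: (psumr_eq0P _ (psumr_eq0P _ gap_sum isT)) => // [b' _|a' _].
  by rewrite subr_ge0 (gap a b').1.
by apply: sumr_ge0 => b' _; rewrite subr_ge0 (gap a' b').1.
Qed.

Lemma cprobI_private (TX TZ TD TD' TW : finType) (X : Om -> TX) (Z : Om -> TZ)
    (D : Om -> TD) (D' : Om -> TD') (W : TD -> Om -> TW) (dec : TZ * TX * TD -> TW)
    (C : pred Om) (i : TD') (j : TD) x z v :
  mutinf mu D' (fun w => (Z w, X w, D w)) = 0 ->
  (forall w, 0 < mu w -> dec (Z w, X w, D w) = W (D w) w) ->
  C =1 (fun w => (D' w == i) && (D w == j)) ->
  prob mu C = prob mu (fun w => D' w == i) * prob mu (fun w => D w == j) ->
  prob mu (fun w => D' w == i) != 0 ->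
  cprob mu (fun w => [&& X w == x, Z w == z & W j w == v]) (fun w => D w == j)
  = cprob mu (fun w => [&& X w == x, Z w == z & W j w == v]) C.
Proof.
move=> private decP C_eq C_indep i_neq0.
pose S y := (y == (z, x, j)) && (dec (z, x, j) == v).
apply: (cprobI_indep (H := fun w => S (Z w, X w, D w))) C_eq C_indep _ _ i_neq0.
  exact: prob_indep_preimage (mutinf_eq0_indep private) i S.
exact: decoded_event_ae decP.
Qed.

End FiniteProbability.

Lemma sum_pair_mul (R : comPzSemiRingType) (A B : finType) (f : A -> R) (g : B -> R) :
  \sum_(p : A * B) f p.1 * g p.2 = (\sum_a f a) * (\sum_b g b).
Proof. by rewrite big_distrlr pair_bigA. Qed.

Section JointLaw.
Variables (R : realType) (F : nat) (TP TS0 TS1 : finType).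
Variables (pP : TP -> R) (pS0 : TS0 -> R) (pS1 : TS1 -> R).
Hypotheses (pP_pmf : is_pmf pP) (pS0_pmf : is_pmf pS0) (pS1_pmf : is_pmf pS1).
Local Notation mu := (@joint R TP TS0 TS1 F pP pS0 pS1).

Lemma prob_demands (E : pred ('I_2 * 'I_2)) :
  prob mu (fun w => E (omD0 w, omD1 w)) = #|E|%:R / 4.
Proof.
pose m2 (s : TP * TS0) := pP s.1 * pS0 s.2.
pose m3 (t : TP * TS0 * TS1) := m2 t.1 * pS1 t.2.
pose weight (d : 'I_2 * 'I_2) := (E d)%:R / 4 : R.
pose dens u := m3 u.1 * weight u.2.
pose unif (f : file F * file F) := (2 ^ F * 2 ^ F)%N%:R^-1 : R.
transitivity (\sum_(w : Omega TP TS0 TS1 F) dens w.1 * unif w.2).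
  rewrite /prob big_mkcond; apply: eq_bigr => -[[t [d0 d1]] f] _.
  rewrite /joint /omD0 /omD1 /= /dens /weight /=.
  by case: (E _); rewrite /= ?(mul1r, mul0r, mulr0).
rewrite sum_pair_mul /dens /= sum_pair_mul /m3 /= sum_pair_mul /m2 /= sum_pair_mul.
case: pP_pmf pS0_pmf pS1_pmf => [_ ->] [_ ->] [_ ->].
have -> : \sum_f unif f = 1.
  rewrite /unif sumr_const card_prod !card_ord -[_^-1 *+ _]mulr_natr mulVf //.
  by rewrite pnatr_eq0 muln_eq0 expn_eq0.
rewrite !mul1r mulr1 /weight -mulr_suml -sum1_card natr_sum [in RHS]big_mkcond.
by congr (_ / _); apply: eq_bigr => d _; rewrite unfold_in; case: (E d).
Qed.

Lemma joint_ge0 w : 0 <= mu w.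
Proof.
case: pP_pmf pS0_pmf pS1_pmf => [pP_ge0 _] [pS0_ge0 _] [pS1_ge0 _].
by rewrite /joint !mulr_ge0 ?invr_ge0.
Qed.

Lemma joint_sum1 : \sum_w mu w = 1.
Proof.
by have := prob_demands xpredT; rewrite card_prod !card_ord divff ?pnatr_eq0.
Qed.

Lemma prob_demand0 a : prob mu (fun w => omD0 w == a) = 2^-1.
Proof.
apply: etrans (prob_demands (fun d => d.1 == a)) _.
rewrite (@eq_card _ _ (setX [set a] [set: 'I_2])) => [|d]; last by rewrite !inE andbT.
by rewrite cardsX cards1 cardsT card_ord mul1n; field.
Qed.

Lemma prob_demand1 b : prob mu (fun w => omD1 w == b) = 2^-1.
Proof.
apply: etrans (prob_demands (fun d => d.2 == b)) _.
rewrite (@eq_card _ _ (setX [set: 'I_2] [set b])) => [|d]; last by rewrite !inE.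
by rewrite cardsX cards1 cardsT card_ord muln1; field.
Qed.

Lemma demands_indep a b :
  prob mu (fun w => (omD0 w == a) && (omD1 w == b))
  = prob mu (fun w => omD0 w == a) * prob mu (fun w => omD1 w == b).
Proof.
rewrite prob_demand0 prob_demand1 -invfM.
apply: etrans (prob_demands (fun d => (d.1 == a) && (d.2 == b))) _.
rewrite (@eq_card _ _ (setX [set a] [set b])) => [|d]; last by rewrite !inE.
by rewrite cardsX !cards1; field.
Qed.

End JointLaw.

Theorem lemma1 (R : realType) (F : nat)
    (TP TS0 TS1 TC0 TC1 TE TJ : finType)
    (pP : TP -> R) (pS0 : TS0 -> R) (pS1 : TS1 -> R)
    (C0 : TS0 -> TP -> file F -> file F -> TC0)
    (C1 : TS1 -> TP -> file F -> file F -> TC1)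
    (E : file F -> file F -> 'I_2 -> 'I_2 -> TP -> TS0 -> TS1 -> TE)
    (J : 'I_2 -> 'I_2 -> TP -> TS0 -> TS1 -> TJ) :
  is_pmf pP -> is_pmf pS0 -> is_pmf pS1 ->
  let mu := @joint R TP TS0 TS1 F pP pS0 pS1 in
  let X := bcast E J in
  let Z0 := cache0 C0 in
  let Z1 := cache1 C1 in
  (* decodability (almost surely) *)
  (exists dec0 : 'I_2 -> TS0 -> TE * TJ -> TC0 * TS0 -> file F,
     forall w, 0 < mu w ->
       dec0 (omD0 w) (omS0 w) (X w) (Z0 w) = omW (omD0 w) w) ->
  (exists dec1 : 'I_2 -> TS1 -> TE * TJ -> TC1 * TS1 -> file F,
     forall w, 0 < mu w ->
       dec1 (omD1 w) (omS1 w) (X w) (Z1 w) = omW (omD1 w) w) ->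
  (* privacy *)
  mutinf mu (@omD1 _ _ _ F) (fun w => (Z0 w, X w, omD0 w)) = 0 ->
  mutinf mu (@omD0 _ _ _ F) (fun w => (Z1 w, X w, omD1 w)) = 0 ->
  forall i j : 'I_2,
  let it := flip2 i in
  (forall (x : TE * TJ) (z : TC1 * TS1) (v : file F),
     let ev := fun w => [&& X w == x, Z1 w == z & omW j w == v] in
     cprob mu ev (fun w => omD1 w == j)
       = cprob mu ev (fun w => (omD0 w == i) && (omD1 w == j)) /\
     cprob mu ev (fun w => (omD0 w == i) && (omD1 w == j))
       = cprob mu ev (fun w => (omD0 w == it) && (omD1 w == j))) /\
  (forall (x : TE * TJ) (z : TC0 * TS0) (v : file F),
     let ev := fun w => [&& X w == x, Z0 w == z & omW j w == v] in
     cprob mu ev (fun w => omD0 w == j)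
       = cprob mu ev (fun w => (omD0 w == j) && (omD1 w == i)) /\
     cprob mu ev (fun w => (omD0 w == j) && (omD1 w == i))
       = cprob mu ev (fun w => (omD0 w == j) && (omD1 w == it))).
Proof.
move=> pP_pmf pS0_pmf pS1_pmf mu X Z0 Z1 [dec0 dec0P] [dec1 dec1P] priv0 priv1 i j it.
have mu_ge0 : forall w, 0 <= mu w := joint_ge0 pP_pmf pS0_pmf pS1_pmf.
have mu_sum1 : \sum_w mu w = 1 := joint_sum1 F pP_pmf pS0_pmf pS1_pmf.
have half_neq0 : 2^-1 != 0 :> R by rewrite invr_eq0 pnatr_eq0.
have user1 i' x z v :
    cprob mu (fun w => [&& X w == x, Z1 w == z & omW j w == v]) (fun w => omD1 w == j)
    = cprob mu (fun w => [&& X w == x, Z1 w == z & omW j w == v])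
        (fun w => (omD0 w == i') && (omD1 w == j)).
  apply: (cprobI_private mu_ge0 mu_sum1 x z v priv1
           (dec := fun y => dec1 y.2 y.1.1.2 y.1.2 y.1.1) dec1P) => //.
  - exact: demands_indep.
  - by rewrite prob_demand0.
have user0 i' x z v :
    cprob mu (fun w => [&& X w == x, Z0 w == z & omW j w == v]) (fun w => omD0 w == j)
    = cprob mu (fun w => [&& X w == x, Z0 w == z & omW j w == v])
        (fun w => (omD0 w == j) && (omD1 w == i')).
  apply: (cprobI_private mu_ge0 mu_sum1 x z v priv0
           (dec := fun y => dec0 y.2 y.1.1.2 y.1.2 y.1.1) dec0P).
  - by move=> w; rewrite andbC.
  - by rewrite demands_indep //; exact: mulrC.
  - by rewrite prob_demand1.
by split=> x z v; split; rewrite -?user0 -?user1.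
Qed.
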